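(* Let $q_1,q_2,q_3,q_4\in\widehat{\mathbb H}$ be four distinct points and let $q'_1,q'_2,q'_3\in\widehat{\mathbb H}$ be three distinct points. Then the set $$S=\{\pi(\gamma)(q_4):\gamma\in GL(2,\mathbb H),\ \pi(\gamma)(q_n)=q'_n,\ n=1,2,3\}\subset\widehat{\mathbb H}$$ is either a 2-sphere, a 2-plane, or a single point. Moreover, $S$ is a single point if and only if $Q(q_1,q_2,q_3,q_4)$ is real.
   Context: $\mathbb H$ denotes the quaternions, $\widehat{\mathbb H}=\mathbb H\cup\{\infty\}$, identified with $\mathbb R^4$ plus a point at infinity (2-spheres and 2-planes are meant in $\mathbb H\cong\mathbb R^4$). $GL(2,\mathbb H)$ acts on $\widehat{\mathbb H}$ by $\pi(\gamma)(q)=(aq+b)(cq+d)^{-1}$ for $\gamma=\begin{pmatrix}a&b\\c&d\end{pmatrix}$. For four distinct points the cross-ratio is $Q(q_1,q_2,q_3,q_4)=(q_2-q_1)^{-1}(q_4-q_1)(q_4-q_3)^{-1}(q_2-q_3)$, defined by taking limits if some $q_n=\infty$. *)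

From HB Require Import structures.
From mathcomp Require Import all_boot all_order all_algebra.
From mathcomp Require Import reals.
Set Implicit Arguments.
Unset Strict Implicit.
Unset Printing Implicit Defensive.
Import Order.TTheory GRing.Theory Num.Theory.
Local Open Scope ring_scope.

Section Quaternions.
Variable R : realType.

(** Quaternions H, identified with R^4 (row vectors): q = q0 + q1 i + q2 j + q3 k. *)
Definition quat := 'rV[R]_4.

Definition qmk (a b c d : R) : quat := \row_(i < 4) nth 0 [:: a; b; c; d] i.
Definition qc (q : quat) (k : nat) : R := q ord0 (inord k).

Definition qmul (p q : quat) : quat :=
  let a1 := qc p 0 in let b1 := qc p 1 in let c1 := qc p 2 in let d1 := qc p 3 in
  let a2 := qc q 0 in let b2 := qc q 1 in let c2 := qc q 2 in let d2 := qc q 3 in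
  qmk (a1*a2 - b1*b2 - c1*c2 - d1*d2)
      (a1*b2 + b1*a2 + c1*d2 - d1*c2)
      (a1*c2 - b1*d2 + c1*a2 + d1*b2)
      (a1*d2 + b1*c2 - c1*b2 + d1*a2).

Definition qone : quat := qmk 1 0 0 0.
Definition qconj (q : quat) : quat := qmk (qc q 0) (- qc q 1) (- qc q 2) (- qc q 3).
Definition qnorm2 (q : quat) : R := \sum_(i < 4) q ord0 i ^+ 2.
Definition qinv (q : quat) : quat := (qnorm2 q)^-1 *: qconj q.
Definition qreal (q : quat) : Prop := qc q 1 = 0 /\ qc q 2 = 0 /\ qc q 3 = 0.

(** widehat H = H ∪ {∞}, with None = ∞ *)
Definition hpoint := option quat.

Record qmat := QMat { ma : quat; mb : quat; mc : quat; md : quat }.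

Definition qmatmul (g h : qmat) : qmat :=
  QMat (qmul (ma g) (ma h) + qmul (mb g) (mc h))
       (qmul (ma g) (mb h) + qmul (mb g) (md h))
       (qmul (mc g) (ma h) + qmul (md g) (mc h))
       (qmul (mc g) (mb h) + qmul (md g) (md h)).

Definition qmat1 : qmat := QMat qone 0 0 qone.

Definition inGL2 (g : qmat) : Prop :=
  exists h, qmatmul g h = qmat1 /\ qmatmul h g = qmat1.

(** pi(gamma)(q) = (aq+b)(cq+d)^{-1}, extended by limits to widehat H *)
Definition mobius (g : qmat) (x : hpoint) : hpoint :=
  match x with
  | Some q => let den := qmul (mc g) q + md g in
              if den == 0 then None
              else Some (qmul (qmul (ma g) q + mb g) (qinv den))
  | None => if mc g == 0 then None else Some (qmul (ma g) (qinv (mc g)))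
  end.

(** Cross-ratio Q(q1,q2,q3,q4) = (q2-q1)^{-1}(q4-q1)(q4-q3)^{-1}(q2-q3),
    extended by limits; only meaningful for distinct points. *)
Definition crossratio (x1 x2 x3 x4 : hpoint) : quat :=
  match x1, x2, x3, x4 with
  | Some a, Some b, Some c, Some d =>
      qmul (qmul (qmul (qinv (b - a)) (d - a)) (qinv (d - c))) (b - c)
  | None, Some b, Some c, Some d => qmul (qinv (d - c)) (b - c)
  | Some a, None, Some c, Some d => qmul (d - a) (qinv (d - c))
  | Some a, Some b, None, Some d => qmul (qinv (b - a)) (d - a)
  | Some a, Some b, Some c, None => qmul (qinv (b - a)) (b - c)
  | _, _, _, _ => 0
  end.

(** A round 2-sphere in H = R^4: centre c, radius r > 0, lying in the affine
    3-space c + rowspace(M), M of rank 3. *)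
Definition is_2sphere (S : hpoint -> Prop) : Prop :=
  exists (c : quat) (r : R) (M : 'M[R]_(3, 4)),
    0 < r /\ \rank M = 3%N /\
    forall y, S y <-> exists u : 'rV[R]_3,
        y = Some (c + u *m M) /\ qnorm2 (u *m M) = r ^+ 2.

(** An affine 2-plane p + rowspace(M) (M of rank 2) of H, closed up by ∞. *)
Definition is_2plane (S : hpoint -> Prop) : Prop :=
  exists (p : quat) (M : 'M[R]_(2, 4)),
    \rank M = 2%N /\
    forall y, S y <-> (y = None \/ exists u : 'rV[R]_2, y = Some (p + u *m M)).

Definition is_point (S : hpoint -> Prop) : Prop :=
  exists p : hpoint, forall y, S y <-> y = p.

End Quaternions.

From HB Require Import structures.
From mathcomp Require Import all_boot all_order all_algebra.
From mathcomp Require Import reals ring lra.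
From mathcomp Require Import boolp classical_sets.
Import Order.TTheory GRing.Theory Num.Theory.
Set Implicit Arguments.
Unset Strict Implicit.
Unset Printing Implicit Defensive.
Local Open Scope ring_scope.
Local Open Scope classical_set_scope.

(** A Möbius map B sends (q1, q2, q3) to (0, 1, oo); as a function of q4 the
    cross-ratio is affine in (q4 - q3)^-1, so B can be chosen to send q4 to
    p = Q(q1, q2, q3, q4). Another Möbius map F sends (0, 1, oo) to (q1', q2', q3').
    The Möbius maps fixing 0, 1 and oo are the conjugations x |-> a x a^-1, hence
    S = F(conjugacy class of p). That class is {p} when p is real and otherwise the
    2-sphere {z | Re z = Re p, |Im z| = |Im p|}, because two pure quaternions of equal
    norm are conjugate. F can be taken of the form x |-> x al + t or
    x |-> c + (x al + be)^-1: right-affine maps preserve 2-spheres, and an inversion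
    maps a 2-sphere to a 2-sphere, or to a 2-plane when the sphere passes through 0. *)

Section QuaternionicMobius.
Variable R : realType.
Local Notation quat := (quat R).
Local Notation hpoint := (hpoint R).
Local Notation qmat := (qmat R).
Local Notation qc := (@qc R).
Local Notation qmk := (@qmk R).
Local Notation qmul := (@qmul R).
Local Notation qinv := (@qinv R).
Local Notation qconj := (@qconj R).
Local Notation qone := (@qone R).
Local Notation N := (@qnorm2 R).
Local Notation mobius := (@mobius R).
Local Notation inGL2 := (@inGL2 R).
Local Notation qmatmul := (@qmatmul R).
Local Notation qmat1 := (@qmat1 R).
Local Notation is_2sphere := (@is_2sphere R).
Local Notation is_2plane := (@is_2plane R).
Local Notation is_point := (@is_point R).

(** * Quaternion arithmetic *)

Lemma qc_qmk0 a b c d : qc (qmk a b c d) 0 = a.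
Proof. by rewrite /qc mxE inordK. Qed.
Lemma qc_qmk1 a b c d : qc (qmk a b c d) 1 = b.
Proof. by rewrite /qc mxE inordK. Qed.
Lemma qc_qmk2 a b c d : qc (qmk a b c d) 2 = c.
Proof. by rewrite /qc mxE inordK. Qed.
Lemma qc_qmk3 a b c d : qc (qmk a b c d) 3 = d.
Proof. by rewrite /qc mxE inordK. Qed.

Lemma qc_ord (x : quat) (i : 'I_4) : x ord0 i = qc x i.
Proof. by rewrite /qc inord_val. Qed.

Lemma quatP (x y : quat) :
  qc x 0 = qc y 0 -> qc x 1 = qc y 1 -> qc x 2 = qc y 2 -> qc x 3 = qc y 3 -> x = y.
Proof.
move=> e0 e1 e2 e3; apply/rowP => -[[|[|[|[|k]]]] lt_k4] //;
  by rewrite !qc_ord /= ?inordK.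
Qed.

Lemma qcD (x y : quat) k : qc (x + y) k = qc x k + qc y k.
Proof. by rewrite /qc mxE. Qed.
Lemma qcN (x : quat) k : qc (- x) k = - qc x k.
Proof. by rewrite /qc mxE. Qed.
Lemma qcB (x y : quat) k : qc (x - y) k = qc x k - qc y k.
Proof. by rewrite qcD qcN. Qed.
Lemma qcZ a (x : quat) k : qc (a *: x) k = a * qc x k.
Proof. by rewrite /qc mxE. Qed.
Lemma qc0 k : qc 0 k = 0.
Proof. by rewrite /qc mxE. Qed.

Lemma qc_mul0 p q :
  qc (qmul p q) 0 = qc p 0 * qc q 0 - qc p 1 * qc q 1 - qc p 2 * qc q 2 - qc p 3 * qc q 3.
Proof. exact: qc_qmk0. Qed.
Lemma qc_mul1 p q :
  qc (qmul p q) 1 = qc p 0 * qc q 1 + qc p 1 * qc q 0 + qc p 2 * qc q 3 - qc p 3 * qc q 2.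
Proof. exact: qc_qmk1. Qed.
Lemma qc_mul2 p q :
  qc (qmul p q) 2 = qc p 0 * qc q 2 - qc p 1 * qc q 3 + qc p 2 * qc q 0 + qc p 3 * qc q 1.
Proof. exact: qc_qmk2. Qed.
Lemma qc_mul3 p q :
  qc (qmul p q) 3 = qc p 0 * qc q 3 + qc p 1 * qc q 2 - qc p 2 * qc q 1 + qc p 3 * qc q 0.
Proof. exact: qc_qmk3. Qed.

Lemma qc_conj0 q : qc (qconj q) 0 = qc q 0. Proof. exact: qc_qmk0. Qed.
Lemma qc_conj1 q : qc (qconj q) 1 = - qc q 1. Proof. exact: qc_qmk1. Qed.
Lemma qc_conj2 q : qc (qconj q) 2 = - qc q 2. Proof. exact: qc_qmk2. Qed.
Lemma qc_conj3 q : qc (qconj q) 3 = - qc q 3. Proof. exact: qc_qmk3. Qed.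

Lemma qc_one0 : qc qone 0 = 1. Proof. exact: qc_qmk0. Qed.
Lemma qc_one1 : qc qone 1 = 0. Proof. exact: qc_qmk1. Qed.
Lemma qc_one2 : qc qone 2 = 0. Proof. exact: qc_qmk2. Qed.
Lemma qc_one3 : qc qone 3 = 0. Proof. exact: qc_qmk3. Qed.

Lemma qc_inv q k : qc (qinv q) k = (N q)^-1 * qc (qconj q) k.
Proof. exact: qcZ. Qed.

Lemma qnorm2E x : N x = qc x 0 ^+ 2 + qc x 1 ^+ 2 + qc x 2 ^+ 2 + qc x 3 ^+ 2.
Proof. by rewrite /qnorm2 !big_ord_recl big_ord0 !qc_ord addr0 !addrA. Qed.

Definition qdot (x y : quat) : R :=
  qc x 0 * qc y 0 + qc x 1 * qc y 1 + qc x 2 * qc y 2 + qc x 3 * qc y 3.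

Ltac qsimpl := rewrite /qdot; repeat progress rewrite ?qc_inv ?qnorm2E ?qcD ?qcN ?qcB ?qcZ ?qc0
  ?qc_mul0 ?qc_mul1 ?qc_mul2 ?qc_mul3 ?qc_conj0 ?qc_conj1 ?qc_conj2 ?qc_conj3
  ?qc_one0 ?qc_one1 ?qc_one2 ?qc_one3 ?qc_qmk0 ?qc_qmk1 ?qc_qmk2 ?qc_qmk3.
Ltac qring := apply: quatP; qsimpl; ring.

Lemma qmulA x y z : qmul x (qmul y z) = qmul (qmul x y) z. Proof. qring. Qed.
Lemma qmulDl x y z : qmul (x + y) z = qmul x z + qmul y z. Proof. qring. Qed.
Lemma qmulDr x y z : qmul x (y + z) = qmul x y + qmul x z. Proof. qring. Qed.
Lemma qmulBl x y z : qmul (x - y) z = qmul x z - qmul y z. Proof. qring. Qed.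
Lemma qmulBr x y z : qmul x (y - z) = qmul x y - qmul x z. Proof. qring. Qed.
Lemma qmulNl x y : qmul (- x) y = - qmul x y. Proof. qring. Qed.
Lemma qmulZl a x y : qmul (a *: x) y = a *: qmul x y. Proof. qring. Qed.
Lemma qmulZr a x y : qmul x (a *: y) = a *: qmul x y. Proof. qring. Qed.
Lemma qmul1l x : qmul qone x = x. Proof. qring. Qed.
Lemma qmul1r x : qmul x qone = x. Proof. qring. Qed.
Lemma qmul0l x : qmul 0 x = 0. Proof. qring. Qed.
Lemma qmul0r x : qmul x 0 = 0. Proof. qring. Qed.
Lemma qmul_conjr x : qmul x (qconj x) = N x *: qone. Proof. qring. Qed.
Lemma qmul_conjl x : qmul (qconj x) x = N x *: qone. Proof. qring. Qed.
Lemma qnormM x y : N (qmul x y) = N x * N y. Proof. qsimpl; ring. Qed.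
Lemma qnorm_conj x : N (qconj x) = N x. Proof. qsimpl; ring. Qed.

Lemma qnorm2_ge0 x : 0 <= N x.
Proof. by rewrite qnorm2E; do ! (apply: addr_ge0 || apply: sqr_ge0). Qed.

Lemma sum4_sqr_eq0 (a b c d : R) : a ^+ 2 + b ^+ 2 + c ^+ 2 + d ^+ 2 = 0 ->
  [/\ a = 0, b = 0, c = 0 & d = 0].
Proof.
move=> s0; have := sqr_ge0 a; have := sqr_ge0 b; have := sqr_ge0 c; have := sqr_ge0 d.
move=> d2 c2 b2 a2; have sq0 (x : R) : x ^+ 2 = 0 -> x = 0 by move/eqP; rewrite sqrf_eq0 => /eqP.
by split; apply: sq0; lra.
Qed.

Lemma qnorm2_eq0 x : (N x == 0) = (x == 0).
Proof.
apply/eqP/eqP => [|->]; last by qsimpl; ring.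
by rewrite qnorm2E => /sum4_sqr_eq0 [e0 e1 e2 e3]; apply: quatP; rewrite qc0.
Qed.

Lemma qnorm20 : N 0 = 0.
Proof. by apply/eqP; rewrite qnorm2_eq0. Qed.

Lemma qconj_eq0 x : (qconj x == 0) = (x == 0).
Proof. by rewrite -!qnorm2_eq0 qnorm_conj. Qed.

Lemma qone_neq0 : qone != 0.
Proof. by apply/eqP => /(congr1 (qc^~ 0%N)) /eqP; rewrite qc_one0 qc0 oner_eq0. Qed.

Lemma qmul_eq0 x y : (qmul x y == 0) = (x == 0) || (y == 0).
Proof. by rewrite -!qnorm2_eq0 qnormM mulf_eq0. Qed.

Lemma qmul_neq0 x y : x != 0 -> y != 0 -> qmul x y != 0.
Proof. by rewrite qmul_eq0 negb_or => -> ->. Qed.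

Lemma qmulrV x : x != 0 -> qmul x (qinv x) = qone.
Proof.
by rewrite -qnorm2_eq0 => nx; rewrite qmulZr qmul_conjr scalerA mulVf ?scale1r.
Qed.
Lemma qmulVr x : x != 0 -> qmul (qinv x) x = qone.
Proof.
by rewrite -qnorm2_eq0 => nx; rewrite qmulZl qmul_conjl scalerA mulVf ?scale1r.
Qed.

Lemma qmulKr a x : a != 0 -> qmul (qinv a) (qmul a x) = x.
Proof. by move=> a0; rewrite qmulA qmulVr // qmul1l. Qed.
Lemma qmulVKr a x : a != 0 -> qmul a (qmul (qinv a) x) = x.
Proof. by move=> a0; rewrite qmulA qmulrV // qmul1l. Qed.
Lemma qmulrK a x : a != 0 -> qmul (qmul x a) (qinv a) = x.
Proof. by move=> a0; rewrite -qmulA qmulrV // qmul1r. Qed.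
Lemma qmulrVK a x : a != 0 -> qmul (qmul x (qinv a)) a = x.
Proof. by move=> a0; rewrite -qmulA qmulVr // qmul1r. Qed.

Lemma qinv0 : qinv 0 = 0.
Proof. by apply/eqP; rewrite /qinv scaler_eq0 qconj_eq0 eqxx orbT. Qed.

Lemma qinv_eq0 a : (qinv a == 0) = (a == 0).
Proof.
apply/eqP/eqP => [a'0|->]; last exact: qinv0.
apply/eqP; apply: contraT => a0.
by move: (qmulrV a0); rewrite a'0 qmul0r => /eqP; rewrite eq_sym (negbTE qone_neq0).
Qed.

Lemma qinv_uniq a b : qmul a b = qone -> b = qinv a.
Proof.
move=> ab1; have a0 : a != 0.
  by apply: contra_eq_neq ab1 => ->; rewrite qmul0l eq_sym qone_neq0.
by rewrite -(qmulKr b a0) ab1 qmul1r.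
Qed.

Lemma qinvK a : qinv (qinv a) = a.
Proof.
have [->|a0] := eqVneq a 0; first by rewrite !qinv0.
exact/esym/qinv_uniq/qmulVr.
Qed.

Lemma qinvM a b : qinv (qmul a b) = qmul (qinv b) (qinv a).
Proof.
have [->|a0] := eqVneq a 0; first by rewrite qmul0l qinv0 qmul0r.
have [->|b0] := eqVneq b 0; first by rewrite qmul0r qinv0 qmul0l.
by symmetry; apply: qinv_uniq; rewrite qmulA qmulrK // qmulrV.
Qed.

Lemma qinv1 : qinv qone = qone.
Proof. by rewrite -(qinv_uniq (qmul1l qone)). Qed.

Lemma qnorm_inv x : N (qinv x) = (N x)^-1.
Proof.
have [->|x0] := eqVneq x 0; first by rewrite qinv0 qnorm20 invr0.
have nx : N x != 0 by rewrite qnorm2_eq0.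
by apply: (mulfI nx); rewrite -qnormM qmulrV // divff //; qsimpl; ring.
Qed.

(** * Möbius transformations *)

(* Points of the quaternionic line are classes of nonzero pairs (u, v) up to right
   scaling (u l, v l); the matrix acts on the left. *)
Definition hproj (w : quat * quat) : hpoint :=
  if w.2 == 0 then None else Some (qmul w.1 (qinv w.2)).
Definition hlift (x : hpoint) : quat * quat :=
  if x is Some q then (q, qone) else (qone, 0).
Definition hact (g : qmat) (w : quat * quat) : quat * quat :=
  (qmul (ma g) w.1 + qmul (mb g) w.2, qmul (mc g) w.1 + qmul (md g) w.2).

Lemma mobius_hact g x : mobius g x = hproj (hact g (hlift x)).
Proof. by case: x => [q|]; rewrite /hproj /= !qmul1r ?qmul0r ?addr0. Qed.

Lemma hlift_neq0 x : hlift x <> (0, 0).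
Proof. by case: x => [q|] [] => [_|] /eqP; rewrite (negbTE qone_neq0). Qed.

Lemma hproj_scale u v l : l != 0 -> hproj (qmul u l, qmul v l) = hproj (u, v).
Proof.
move=> l0; rewrite /hproj /= qmul_eq0 (negbTE l0) orbF.
by case: eqP => // /eqP v0; rewrite qinvM qmulA qmulrK.
Qed.

Lemma hact_scale g u v l :
  hact g (qmul u l, qmul v l) = (qmul (hact g (u, v)).1 l, qmul (hact g (u, v)).2 l).
Proof. by rewrite /hact /= !qmulDl !qmulA. Qed.

Lemma hlift_hproj u v : (u, v) <> (0, 0) ->
  exists2 l, l != 0 & (u, v) = (qmul (hlift (hproj (u, v))).1 l, qmul (hlift (hproj (u, v))).2 l).
Proof.
rewrite /hproj /=; have [-> uv0|v0 _] := eqVneq v 0.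
  have u0 : u != 0 by apply: contra_not_neq uv0 => ->.
  by exists u; rewrite //= qmul1l qmul0l.
by exists v; rewrite //= qmulrVK // qmul1l.
Qed.

Lemma hproj_hact g w : w <> (0, 0) -> hproj (hact g w) = mobius g (hproj w).
Proof.
case: w => u v /hlift_hproj [l l0]; rewrite mobius_hact.
case: (hlift _) => a b /= ->; rewrite hact_scale.
by case: (hact g (a, b)) => ??; rewrite hproj_scale.
Qed.

Lemma hact_mul g h w : hact (qmatmul g h) w = hact g (hact h w).
Proof. by congr pair; rewrite /= !qmulDl !qmulDr !qmulA addrACA. Qed.

Lemma hact1 w : hact qmat1 w = w.
Proof. by case: w => u v; rewrite /hact /= !qmul1l !qmul0l addr0 add0r. Qed.

Lemma qmatmulA g h k : qmatmul g (qmatmul h k) = qmatmul (qmatmul g h) k.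
Proof. by congr QMat; rewrite /= !qmulDl !qmulDr !qmulA addrACA. Qed.

Lemma qmatmul1r g : qmatmul g qmat1 = g.
Proof. by case: g => a b c d; congr QMat; rewrite /= !qmul1r !qmul0r ?addr0 ?add0r. Qed.

Lemma inGL2_mul g h : inGL2 g -> inGL2 h -> inGL2 (qmatmul g h).
Proof.
move=> [g' [gg' g'g]] [h' [hh' h'h]]; exists (qmatmul h' g').
split; first by rewrite !qmatmulA -(qmatmulA g) hh' qmatmul1r.
by rewrite !qmatmulA -(qmatmulA h') g'g qmatmul1r.
Qed.

Lemma inGL2_hact_eq0 h w : inGL2 h -> hact h w = (0, 0) -> w = (0, 0).
Proof.
move=> [h' [_ h'h]] hw0; rewrite -(hact1 w) -h'h hact_mul hw0.
by rewrite /hact /= !qmul0r addr0.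
Qed.

Lemma mobius_mul g h x : inGL2 h -> mobius (qmatmul g h) x = mobius g (mobius h x).
Proof.
move=> Gh; rewrite !(mobius_hact _ x) hact_mul.
have : hact h (hlift x) <> (0, 0) by move/(inGL2_hact_eq0 Gh); apply: hlift_neq0.
by case: (hact h _) => u v ?; rewrite -hproj_hact.
Qed.

Lemma mobius1 x : mobius qmat1 x = x.
Proof.
rewrite mobius_hact hact1 /hproj; case: x => [q|] /=.
  by rewrite (negbTE qone_neq0) qinv1 qmul1r.
by rewrite eqxx.
Qed.

Lemma inGL2_inv g : inGL2 g -> exists h, [/\ inGL2 h,
  forall z, mobius h (mobius g z) = z & forall z, mobius g (mobius h z) = z].
Proof.
move=> Gg; have [h [gh hg]] := Gg; have Gh : inGL2 h by exists g.
by exists h; split => // z; rewrite -mobius_mul // ?gh ?hg mobius1.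
Qed.

Lemma mobius_inj g : inGL2 g -> injective (mobius g).
Proof. by move=> /inGL2_inv [h [_ hgK _]]; apply: can_inj hgK. Qed.

Definition mx_trans (t : quat) : qmat := QMat qone t 0 qone.
Definition mx_diag (a d : quat) : qmat := QMat a 0 0 d.
Definition mx_lmul (a : quat) : qmat := mx_diag a qone.
Definition mx_rmul (a : quat) : qmat := mx_diag qone (qinv a).
Definition mx_conjg (a : quat) : qmat := mx_diag a a.
Definition mx_inv : qmat := QMat 0 qone qone 0.

Lemma inGL2_trans t : inGL2 (mx_trans t).
Proof.
exists (mx_trans (- t)); split; congr QMat;
  by rewrite /= ?qmul1l ?qmul1r ?qmul0l ?qmul0r ?addr0 ?add0r ?subrr ?addNr.
Qed.

Lemma inGL2_diag a d : a != 0 -> d != 0 -> inGL2 (mx_diag a d).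
Proof.
move=> a0 d0; exists (mx_diag (qinv a) (qinv d)); split; congr QMat;
  by rewrite /= ?qmulrV ?qmulVr ?qmul0l ?qmul0r ?addr0 ?add0r.
Qed.

Lemma inGL2_lmul a : a != 0 -> inGL2 (mx_lmul a).
Proof. by move=> a0; apply: inGL2_diag qone_neq0. Qed.
Lemma inGL2_rmul a : a != 0 -> inGL2 (mx_rmul a).
Proof. by move=> a0; apply: inGL2_diag; rewrite ?qinv_eq0 ?qone_neq0. Qed.
Lemma inGL2_conjg a : a != 0 -> inGL2 (mx_conjg a).
Proof. by move=> a0; apply: inGL2_diag. Qed.

Lemma inGL2_inv_mx : inGL2 mx_inv.
Proof.
by exists mx_inv; split; congr QMat; rewrite /= ?qmul1l ?qmul0l ?addr0 ?add0r.
Qed.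

Lemma mobius_trans t q : mobius (mx_trans t) (Some q) = Some (q + t).
Proof.
by rewrite /mobius /= qmul0l add0r (negbTE qone_neq0) qinv1 qmul1r qmul1l addrC.
Qed.

Lemma mobius_diag_inf a d : mobius (mx_diag a d) None = None.
Proof. by rewrite /mobius /= eqxx. Qed.

Lemma mobius_trans_inf t : mobius (mx_trans t) None = None.
Proof. by rewrite /mobius /= eqxx. Qed.

Lemma mobius_diag a d q : d != 0 -> mobius (mx_diag a d) (Some q) = Some (qmul (qmul a q) (qinv d)).
Proof. by move=> d0; rewrite /mobius /= qmul0l add0r (negbTE d0) addr0. Qed.

Lemma mobius_lmul a q : mobius (mx_lmul a) (Some q) = Some (qmul a q).
Proof. by rewrite mobius_diag ?qone_neq0 // qinv1 qmul1r. Qed.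

Lemma mobius_rmul a q : a != 0 -> mobius (mx_rmul a) (Some q) = Some (qmul q a).
Proof. by move=> a0; rewrite mobius_diag ?qinv_eq0 // qinvK qmul1l. Qed.

Lemma mobius_conjg a q : a != 0 -> mobius (mx_conjg a) (Some q) = Some (qmul (qmul a q) (qinv a)).
Proof. exact: mobius_diag. Qed.

Lemma mobius_inv_mx q : mobius mx_inv (Some q) = if q == 0 then None else Some (qinv q).
Proof. by rewrite /mobius /= qmul0l add0r qmul1l addr0 qmul1l. Qed.

Lemma mobius_inv_mx_inf : mobius mx_inv None = Some 0.
Proof. by rewrite /mobius /= (negbTE qone_neq0) qmul0l. Qed.

Definition mx_laff (be t : quat) : qmat := qmatmul (mx_lmul be) (mx_trans t).
Definition mx_affinv (al be c ga : quat) : qmat :=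
  qmatmul (mx_trans al) (qmatmul (mx_lmul be) (qmatmul (mx_rmul ga)
    (qmatmul mx_inv (mx_trans (- c))))).

Lemma inGL2_laff be t : be != 0 -> inGL2 (mx_laff be t).
Proof. by move=> be0; apply: inGL2_mul (inGL2_lmul be0) (inGL2_trans t). Qed.

Lemma mobius_laff be t x : mobius (mx_laff be t) (Some x) = Some (qmul be (x + t)).
Proof. by rewrite mobius_mul ?mobius_trans ?mobius_lmul //; apply: inGL2_trans. Qed.

Lemma mobius_laff_inf be t : mobius (mx_laff be t) None = None.
Proof. by rewrite mobius_mul ?mobius_trans_inf ?mobius_diag_inf //; apply: inGL2_trans. Qed.

Section AffInv.
Variables al be c ga : quat.
Hypotheses (be0 : be != 0) (ga0 : ga != 0).

Let GL_tail := inGL2_mul inGL2_inv_mx (inGL2_trans (- c)).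
Let GL_rtail := inGL2_mul (inGL2_rmul ga0) GL_tail.
Let GL_ltail := inGL2_mul (inGL2_lmul be0) GL_rtail.

Lemma inGL2_affinv : inGL2 (mx_affinv al be c ga).
Proof. exact: inGL2_mul (inGL2_trans al) GL_ltail. Qed.

Let mobius_affinvE x : mobius (mx_affinv al be c ga) x =
  mobius (mx_trans al) (mobius (mx_lmul be) (mobius (mx_rmul ga)
    (mobius mx_inv (mobius (mx_trans (- c)) x)))).
Proof. by rewrite !mobius_mul //; apply: inGL2_trans. Qed.

Lemma mobius_affinv x : x != c ->
  mobius (mx_affinv al be c ga) (Some x) = Some (al + qmul (qmul be (qinv (x - c))) ga).
Proof.
rewrite -subr_eq0 => xc; rewrite mobius_affinvE mobius_trans mobius_inv_mx (negbTE xc).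
by rewrite mobius_rmul // mobius_lmul mobius_trans addrC qmulA.
Qed.

Lemma mobius_affinv_pole : mobius (mx_affinv al be c ga) (Some c) = None.
Proof.
rewrite mobius_affinvE mobius_trans mobius_inv_mx subrr eqxx.
by rewrite !mobius_diag_inf mobius_trans_inf.
Qed.

Lemma mobius_affinv_inf : mobius (mx_affinv al be c ga) None = Some al.
Proof.
rewrite mobius_affinvE mobius_trans_inf mobius_inv_mx_inf mobius_rmul // mobius_lmul.
by rewrite mobius_trans qmul0l qmul0r add0r.
Qed.

End AffInv.

Lemma qmul_sub_invr x a c : x != c ->
  qmul (x - a) (qinv (x - c)) = qone + qmul (c - a) (qinv (x - c)).
Proof.
rewrite -subr_eq0 => xc; have -> : x - a = (x - c) + (c - a) by rewrite addrA subrK.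
by rewrite qmulDl qmulrV.
Qed.

Lemma crossratio_affinv a b c x : x != c ->
  crossratio (Some a) (Some b) (Some c) (Some x) =
  qmul (qinv (b - a)) (b - c) + qmul (qmul (qmul (qinv (b - a)) (c - a)) (qinv (x - c))) (b - c).
Proof.
move=> xc; rewrite /crossratio -(qmulA (qinv _)) qmul_sub_invr //.
by rewrite (qmulDr (qinv _)) qmul1r qmulDl !qmulA.
Qed.

Definition cr_normalizer (B : qmat) (q1 q2 q3 : hpoint) := [/\ inGL2 B,
  mobius B q1 = Some 0, mobius B q2 = Some qone, mobius B q3 = None &
  forall q4, q4 <> q1 -> q4 <> q2 -> q4 <> q3 -> mobius B q4 = Some (crossratio q1 q2 q3 q4)].

Lemma cr_normalizer_finite a b c : a != b -> a != c -> b != c ->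
  cr_normalizer (mx_affinv (qmul (qinv (b - a)) (b - c)) (qmul (qinv (b - a)) (c - a)) c (b - c))
    (Some a) (Some b) (Some c).
Proof.
move=> ab ac bc; have ba : b - a != 0 by rewrite subr_eq0 eq_sym.
have ca : c - a != 0 by rewrite subr_eq0 eq_sym.
have bc0 : b - c != 0 by rewrite subr_eq0.
have be0 : qmul (qinv (b - a)) (c - a) != 0 by rewrite qmul_neq0 ?qinv_eq0.
set B := mx_affinv _ _ _ _.
have Bx x : x != c -> mobius B (Some x) = Some (crossratio (Some a) (Some b) (Some c) (Some x)).
  by move=> xc; rewrite mobius_affinv ?crossratio_affinv.
split; first exact: inGL2_affinv.
- by rewrite Bx // /crossratio subrr qmul0r !qmul0l.
- by rewrite Bx // /crossratio qmulVr // qmul1l qmulVr.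
- exact: mobius_affinv_pole.
case=> [d _ _ dc|_ _ _]; last exact: mobius_affinv_inf.
by rewrite Bx //; apply: contra_not_neq dc => ->.
Qed.

Lemma cr_normalizer_inf3 a b : a != b ->
  cr_normalizer (mx_laff (qinv (b - a)) (- a)) (Some a) (Some b) None.
Proof.
move=> ab; have ba : b - a != 0 by rewrite subr_eq0 eq_sym.
split; first by apply: inGL2_laff; rewrite qinv_eq0.
- by rewrite mobius_laff subrr qmul0r.
- by rewrite mobius_laff qmulVr.
- exact: mobius_laff_inf.
by case=> [d|] // _ _ _; rewrite mobius_laff.
Qed.

Lemma cr_normalizer_inf2 a c : a != c ->
  cr_normalizer (mx_affinv qone (c - a) c qone) (Some a) None (Some c).
Proof.
move=> ac; have ca : c - a != 0 by rewrite subr_eq0 eq_sym.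
set B := mx_affinv _ _ _ _.
have Bx x : x != c -> mobius B (Some x) = Some (qmul (x - a) (qinv (x - c))).
  by move=> xc; rewrite mobius_affinv ?qone_neq0 // qmul1r qmul_sub_invr.
split; first by apply: inGL2_affinv; rewrite ?qone_neq0.
- by rewrite Bx // subrr qmul0l.
- by rewrite mobius_affinv_inf ?qone_neq0.
- by rewrite mobius_affinv_pole ?qone_neq0.
case=> [d _ _ dc|_ /(_ erefl)] //.
by rewrite Bx //; apply: contra_not_neq dc => ->.
Qed.

Lemma cr_normalizer_inf1 b c : b != c ->
  cr_normalizer (mx_affinv 0 qone c (b - c)) None (Some b) (Some c).
Proof.
move=> bc; have bc0 : b - c != 0 by rewrite subr_eq0.
set B := mx_affinv _ _ _ _.
have Bx x : x != c -> mobius B (Some x) = Some (qmul (qinv (x - c)) (b - c)).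
  by move=> xc; rewrite mobius_affinv ?qone_neq0 // qmul1l add0r.
split; first by apply: inGL2_affinv; rewrite ?qone_neq0.
- by rewrite mobius_affinv_inf ?qone_neq0.
- by rewrite Bx // qmulVr.
- by rewrite mobius_affinv_pole ?qone_neq0.
case=> [d _ _ dc|/(_ erefl)] //.
by rewrite Bx //; apply: contra_not_neq dc => ->.
Qed.

Lemma cr_normalizer_exists q1 q2 q3 : q1 <> q2 -> q1 <> q3 -> q2 <> q3 ->
  exists B, cr_normalizer B q1 q2 q3.
Proof.
have neq (x y : quat) : Some x <> Some y -> x != y.
  by move=> xy; apply/eqP => e; apply: xy; rewrite e.
case: q1 q2 q3 => [a|] [b|] [c|] h12 h13 h23;
  try by [exfalso; apply: h12 | exfalso; apply: h13 | exfalso; apply: h23].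
- by eexists; apply: cr_normalizer_finite; apply: neq.
- by eexists; apply: cr_normalizer_inf3; apply: neq.
- by eexists; apply: cr_normalizer_inf2; apply: neq.
- by eexists; apply: cr_normalizer_inf1; apply: neq.
Qed.

Definition mx_raff (al t : quat) : qmat := qmatmul (mx_trans t) (mx_rmul al).
Definition mx_rinv (c al be : quat) : qmat := qmatmul (mx_trans c) (qmatmul mx_inv (mx_raff al be)).

Lemma inGL2_raff al t : al != 0 -> inGL2 (mx_raff al t).
Proof. by move=> al0; apply: inGL2_mul (inGL2_trans t) (inGL2_rmul al0). Qed.

Lemma inGL2_rinv c al be : al != 0 -> inGL2 (mx_rinv c al be).
Proof.
move=> al0; apply: inGL2_mul (inGL2_trans c) _.
exact: inGL2_mul inGL2_inv_mx (inGL2_raff be al0).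
Qed.

Lemma mobius_raff al t x : al != 0 ->
  mobius (mx_raff al t) x = mobius (mx_trans t) (mobius (mx_rmul al) x).
Proof. by move=> al0; rewrite mobius_mul //; apply: inGL2_rmul. Qed.

Lemma mobius_rinv c al be x : al != 0 ->
  mobius (mx_rinv c al be) x = mobius (mx_trans c) (mobius mx_inv (mobius (mx_raff al be) x)).
Proof.
move=> al0; have GL_raff := inGL2_raff be al0.
rewrite mobius_mul; last exact: inGL2_mul inGL2_inv_mx GL_raff.
by rewrite (mobius_mul mx_inv).
Qed.

Definition inv_from (c : quat) (w : hpoint) : quat := if w is Some q then qinv (q - c) else 0.

Lemma inv_fromK c w : w <> Some c -> mobius (mx_trans c) (mobius mx_inv (Some (inv_from c w))) = w.
Proof.
case: w => [q|] qc; rewrite /inv_from; last by rewrite mobius_inv_mx eqxx mobius_trans_inf.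
have qc0 : q - c != 0 by rewrite subr_eq0; apply/eqP => e; apply: qc; rewrite e.
by rewrite mobius_inv_mx qinv_eq0 (negbTE qc0) mobius_trans qinvK subrK.
Qed.

Lemma inv_from_inj c w1 w2 : w1 <> Some c -> w2 <> Some c ->
  inv_from c w1 = inv_from c w2 -> w1 = w2.
Proof. by move=> w1c w2c e; rewrite -(inv_fromK w1c) -(inv_fromK w2c) e. Qed.

(* A 2-sphere goes through at most one inversion under such an F, so planes never
   have to be inverted. *)
Definition frame_shape (F : qmat) :=
  (exists al t, al != 0 /\ F = mx_raff al t) \/ (exists c al be, al != 0 /\ F = mx_rinv c al be).

Lemma frame_map_exists w1 w2 w3 : w1 <> w2 -> w1 <> w3 -> w2 <> w3 -> exists F, [/\ inGL2 F,
  mobius F (Some 0) = w1, mobius F (Some qone) = w2, mobius F None = w3 & frame_shape F].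
Proof.
case: w3 => [c|] w12 w13 w23.
  set be := inv_from c w1; set al := inv_from c w2 - be.
  have al0 : al != 0 by rewrite subr_eq0; apply/eqP => /(inv_from_inj w23 w13)/esym.
  exists (mx_rinv c al be); split; last (by right; exists c, al, be); first exact: inGL2_rinv.
  - by rewrite mobius_rinv // mobius_raff // mobius_rmul // qmul0l mobius_trans add0r inv_fromK.
  - by rewrite mobius_rinv // mobius_raff // mobius_rmul // qmul1l mobius_trans subrK inv_fromK.
  - rewrite mobius_rinv // mobius_raff // mobius_diag_inf mobius_trans_inf.
    by rewrite mobius_inv_mx_inf mobius_trans add0r.
case: w1 w2 w12 w13 w23 => [a|] // [b|] // ab _ _.
have ba : b - a != 0 by rewrite subr_eq0; apply/eqP => e; apply: ab; rewrite e.
exists (mx_raff (b - a) a); split; last (by left; exists (b - a), a); first exact: inGL2_raff.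
- by rewrite mobius_raff // mobius_rmul // mobius_trans qmul0l add0r.
- by rewrite mobius_raff // mobius_rmul // mobius_trans qmul1l subrK.
- by rewrite mobius_raff // mobius_diag_inf mobius_trans_inf.
Qed.

Lemma frame_stabilizer g : inGL2 g ->
  mobius g (Some 0) = Some 0 -> mobius g (Some qone) = Some qone -> mobius g None = None ->
  exists2 a, a != 0 & forall q, mobius g (Some q) = Some (qmul (qmul a q) (qinv a)).
Proof.
case: g => a b c d _; rewrite /mobius /= => g0 g1.
case: ifP => // /eqP c0 _; subst c; move: g0 g1; rewrite !qmul0l !qmul0r !add0r qmul1r.
case: ifP => // /negbT d0 [g0] [g1].
have b0 : b = 0 by rewrite -(qmulrVK b d0) g0 qmul0l.
have ad : a = d by move: g1; rewrite b0 addr0 -{2}(qmulrVK a d0) => ->; rewrite qmul1l.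
by exists d => // q; rewrite qmul0l add0r (negbTE d0) b0 addr0 ad.
Qed.

Definition conj_orbit (p : quat) : set hpoint :=
  [set Some (qmul (qmul a p) (qinv a)) | a in [set a : quat | a != 0]].

Definition solution_set (q1 q2 q3 q4 q1' q2' q3' : hpoint) : set hpoint := fun y =>
  exists g : qmat, inGL2 g /\ mobius g q1 = q1' /\ mobius g q2 = q2' /\
                   mobius g q3 = q3' /\ mobius g q4 = y.

Lemma solution_setE q1 q2 q3 q4 q1' q2' q3' B F :
  cr_normalizer B q1 q2 q3 -> q4 <> q1 -> q4 <> q2 -> q4 <> q3 ->
  inGL2 F -> mobius F (Some 0) = q1' -> mobius F (Some qone) = q2' -> mobius F None = q3' ->
  solution_set q1 q2 q3 q4 q1' q2' q3' = mobius F @` conj_orbit (crossratio q1 q2 q3 q4).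
Proof.
move=> [GB B1 B2 B3 Bcr] q41 q42 q43 GF F0 F1 Finf; have B4 := Bcr q4 q41 q42 q43.
apply/predeqP => y; split.
  case=> g [Gg [g1 [g2 [g3 <-]]]].
  have [Bi [GBi BiK BKi]] := inGL2_inv GB; have [Fi [GFi FiK FKi]] := inGL2_inv GF.
  set k := qmatmul Fi (qmatmul g Bi).
  have Gk : inGL2 k by apply: inGL2_mul GFi (inGL2_mul Gg GBi).
  have kE z : mobius k z = mobius Fi (mobius g (mobius Bi z)).
    by rewrite !mobius_mul //; apply: inGL2_mul Gg GBi.
  have k0 : mobius k (Some 0) = Some 0 by rewrite kE -B1 BiK g1 -F0 FiK.
  have k1 : mobius k (Some qone) = Some qone by rewrite kE -B2 BiK g2 -F1 FiK.
  have kinf : mobius k None = None by rewrite kE -B3 BiK g3 -Finf FiK.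
  have [a a0 ka] := frame_stabilizer Gk k0 k1 kinf.
  exists (Some (qmul (qmul a (crossratio q1 q2 q3 q4)) (qinv a))); first by exists a.
  by rewrite -ka kE -B4 BiK FKi.
case=> _ [a a0 <-] <-; exists (qmatmul F (qmatmul (mx_conjg a) B)).
have GaB := inGL2_mul (inGL2_conjg a0) GB.
split; first exact: inGL2_mul GF GaB.
rewrite !mobius_mul // B1 B2 B3 B4 !mobius_conjg // mobius_diag_inf.
by rewrite qmul0r qmul0l qmul1r qmulrV.
Qed.

(** * Spheres and planes *)

Lemma qdotC x y : qdot x y = qdot y x. Proof. qsimpl; ring. Qed.
Lemma qdotDl x y z : qdot (x + y) z = qdot x z + qdot y z. Proof. qsimpl; ring. Qed.
Lemma qdotBl x y z : qdot (x - y) z = qdot x z - qdot y z. Proof. qsimpl; ring. Qed.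
Lemma qdotBr x y z : qdot z (x - y) = qdot z x - qdot z y. Proof. qsimpl; ring. Qed.
Lemma qdotZl a x z : qdot (a *: x) z = a * qdot x z. Proof. qsimpl; ring. Qed.
Lemma qdotZr a x z : qdot z (a *: x) = a * qdot z x. Proof. qsimpl; ring. Qed.
Lemma qdot0l x : qdot 0 x = 0. Proof. qsimpl; ring. Qed.
Lemma qdot0r x : qdot x 0 = 0. Proof. qsimpl; ring. Qed.
Lemma qdotxx x : qdot x x = N x. Proof. qsimpl; ring. Qed.
Lemma qdotMr x y k : qdot (qmul x k) (qmul y k) = N k * qdot x y. Proof. qsimpl; ring. Qed.
Lemma qdot_conj x y : qdot (qconj x) (qconj y) = qdot x y. Proof. qsimpl; ring. Qed.
Lemma qdot_conjl x y : qdot (qconj x) y = qdot x (qconj y). Proof. qsimpl; ring. Qed.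
Lemma qdot1r x : qdot x qone = qc x 0. Proof. qsimpl; ring. Qed.
Lemma qnormD x y : N (x + y) = N x + 2 * qdot x y + N y. Proof. qsimpl; ring. Qed.
Lemma qnormB x y : N (x - y) = N x - 2 * qdot x y + N y. Proof. qsimpl; ring. Qed.
Lemma qnormZ a x : N (a *: x) = a ^+ 2 * N x. Proof. qsimpl; ring. Qed.

Lemma qdot_invl z v : qdot (qinv z) v = (N z)^-1 * qdot z (qconj v).
Proof. by rewrite qdotZl qdot_conjl. Qed.

Definition sphere_set (m : quat) (h : R) (c : quat) (rho : R) : set hpoint :=
  fun y => exists z, y = Some z /\ qdot z m = h /\ N (z - c) = rho.
Definition plane_set (a : quat) (al : R) (b : quat) (be : R) : set hpoint :=
  fun y => y = None \/ exists z, y = Some z /\ qdot z a = al /\ qdot z b = be.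

Definition is_sphere_set (X : set hpoint) :=
  exists m h c rho, m != 0 /\ X = sphere_set m h c rho.
Definition is_plane_set (X : set hpoint) :=
  exists a al b be, [/\ a != 0, b != 0, qdot a b = 0 & X = plane_set a al b be].

Lemma sphere_setP m h c rho z :
  sphere_set m h c rho (Some z) <-> qdot z m = h /\ N z - 2 * qdot z c + (N c - rho) = 0.
Proof.
split; first by case=> _ [[<-] [-> <-]]; rewrite qnormB; split => //; ring.
case=> zm zc; exists z; do 2 split => //.
by apply/eqP; rewrite qnormB -subr_eq0 -zc; apply/eqP; ring.
Qed.

Lemma plane_setP a al b be z : plane_set a al b be (Some z) <-> qdot z a = al /\ qdot z b = be.
Proof. by split=> [[//|[_ [[<-] //]]]|zab]; right; exists z. Qed.

Lemma trans_sphere_set t m h c rho : mobius (mx_trans t) @` sphere_set m h c rho =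
  sphere_set m (h + qdot t m) (c + t) rho.
Proof.
apply/predeqP => y; split.
  case=> _ [z [-> [zm zc]]] <-; rewrite mobius_trans; exists (z + t).
  by rewrite qdotDl zm -zc opprD addrACA subrr addr0.
case=> z [-> [zm zc]]; exists (Some (z - t)); last by rewrite mobius_trans subrK.
exists (z - t); rewrite qdotBl zm addrK; do 2 split => //.
by rewrite -zc; congr (N _); rewrite opprD addrA addrAC.
Qed.

Lemma trans_plane_set t a al b be : mobius (mx_trans t) @` plane_set a al b be =
  plane_set a (al + qdot t a) b (be + qdot t b).
Proof.
apply/predeqP => y; split.
  case=> _ [->|[z [-> [za zb]]]] <-; first by left; rewrite mobius_trans_inf.
  by right; rewrite mobius_trans; exists (z + t); rewrite !qdotDl za zb.
case=> [->|[z [-> [za zb]]]]; first by exists None; [left | rewrite mobius_trans_inf].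
exists (Some (z - t)); last by rewrite mobius_trans subrK.
by right; exists (z - t); rewrite !qdotBl za zb !addrK.
Qed.

Lemma rmul_sphere_set k m h c rho : k != 0 -> mobius (mx_rmul k) @` sphere_set m h c rho =
  sphere_set (qmul m k) (h * N k) (qmul c k) (rho * N k).
Proof.
move=> k0; have Nk : N k != 0 by rewrite qnorm2_eq0.
apply/predeqP => y; split.
  case=> _ [z [-> [zm zc]]] <-; rewrite mobius_rmul //; exists (qmul z k).
  by rewrite qdotMr zm mulrC -qmulBl qnormM zc.
case=> z [-> [zm zc]]; exists (Some (qmul z (qinv k))); last by rewrite mobius_rmul // qmulrVK.
exists (qmul z (qinv k)); split => //; split.
  by apply: (mulfI Nk); rewrite -qdotMr qmulrVK // zm mulrC.
by apply: (mulIf Nk); rewrite -qnormM qmulBl qmulrVK.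
Qed.

Lemma image_involutive {T : Type} (f : T -> T) (A : set T) : involutive f -> f @` A = f @^-1` A.
Proof.
move=> fK; apply/predeqP => y; split; first by case=> x Ax <-; rewrite /preimage /= fK.
by move=> Afy; exists (f y); rewrite ?fK.
Qed.

Lemma mobius_inv_mxK : involutive (mobius mx_inv).
Proof.
case=> [q|]; last by rewrite mobius_inv_mx_inf mobius_inv_mx eqxx.
rewrite mobius_inv_mx; have [->|q0] := eqVneq q 0; first by rewrite mobius_inv_mx_inf.
by rewrite mobius_inv_mx qinv_eq0 (negbTE q0) qinvK.
Qed.

Lemma sphere_set_None m h c rho : ~ sphere_set m h c rho None.
Proof. by case=> z []. Qed.

Lemma sphere_set_inv m h c rho w : w != 0 -> sphere_set m h c rho (Some (qinv w)) <->
  qdot w (qconj m) = h * N w /\ (N c - rho) * N w - 2 * qdot w (qconj c) + 1 = 0.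
Proof.
move=> w0; have nw : N w != 0 by rewrite qnorm2_eq0.
rewrite sphere_setP !qdot_invl qnorm_inv.
have E1 : ((N w)^-1 * qdot w (qconj m) = h) <-> (qdot w (qconj m) = h * N w).
  by split => [<-|->]; [rewrite mulrAC mulVf ?mul1r | rewrite mulrCA mulVf ?mulr1].
have E2 : (N w)^-1 - 2 * ((N w)^-1 * qdot w (qconj c)) + (N c - rho) =
          (N w)^-1 * ((N c - rho) * N w - 2 * qdot w (qconj c) + 1) by field.
have E0 t : (N w)^-1 * t = 0 <-> t = 0.
  by split=> [/eqP|->]; rewrite ?mulr0 // mulf_eq0 invr_eq0 (negbTE nw) => /eqP.
by rewrite E1 E2 E0.
Qed.

Lemma inv_sphere_eqs_off (K rho h n e A : R) : K != 0 ->
  (A = h * n /\ K * n - 2 * e + 1 = 0) <->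
  (K * A - 2 * h * e = - h /\ n - 2 * (K^-1 * e) + (K^-1 ^+ 2 * (K + rho) - rho / K ^+ 2) = 0).
Proof.
move=> K0; have -> : n - 2 * (K^-1 * e) + (K^-1 ^+ 2 * (K + rho) - rho / K ^+ 2) =
  K^-1 * (K * n - 2 * e + 1) by field.
split=> [[-> E]|[hA /eqP]].
  by rewrite E mulr0 (_ : e = (K * n + 1) / 2); [split => //; field | lra].
rewrite mulf_eq0 invr_eq0 (negbTE K0) /= => /eqP E.
split=> //; apply: (mulfI K0); have -> : K * A = 2 * h * e - h by lra.
by rewrite (_ : e = (K * n + 1) / 2); [field | lra].
Qed.

Lemma inv_sphere_eqs_on (h n e A s : R) : h != 0 ->
  (A = h * n /\ 0 * n - 2 * e + 1 = 0) <-> (e = 1 / 2 /\ n - 2 * ((2 * h)^-1 * A) + (s - s) = 0).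
Proof.
move=> h0; rewrite subrr addr0 mul0r add0r.
split=> [[-> E]|[-> E]]; first by split; [lra | field].
split; last lra.
by rewrite (_ : n = 2 * ((2 * h)^-1 * A)); [field | lra].
Qed.

Lemma inv_sphere_eqs_plane (Nm d n e A : R) : Nm != 0 ->
  (A = 0 * n /\ 0 * n - 2 * e + 1 = 0) <-> (A = 0 /\ Nm * e - d * A = Nm / 2).
Proof.
move=> Nm0; rewrite !mul0r add0r; split=> -[-> E]; split=> //; rewrite ?mulr0 ?subr0 in E *.
  by rewrite (_ : e = 1 / 2); [field | lra].
suff : e = 1 / 2 by lra.
by apply: (mulfI Nm0); rewrite E; field.
Qed.

(* K = 0 iff 0 lies on the 3-sphere |z - c|^2 = rho, and h = 0 iff 0 lies on the
   hyperplane <z, m> = h. *)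
Section InvertSphere.
Variables (m : quat) (h : R) (c : quat) (rho : R).
Let K := N c - rho.
Local Notation X := (sphere_set m h c rho).

Let Nc : N c = K + rho.
Proof. by rewrite /K subrK. Qed.

Let X_inv : mobius mx_inv @` X = mobius mx_inv @^-1` X.
Proof. exact/image_involutive/mobius_inv_mxK. Qed.

Lemma inv_sphere_set_off : K != 0 ->
  mobius mx_inv @` X =
  sphere_set (K *: qconj m - (2 * h) *: qconj c) (- h) (K^-1 *: qconj c) (rho / K ^+ 2).
Proof.
move=> K0; rewrite X_inv; apply/predeqP => -[w|]; rewrite /preimage /mkset; last first.
  rewrite mobius_inv_mx_inf sphere_setP !qdot0l qnorm20 mulr0 subrr add0r -/K.
  by split=> [[_ /eqP]|/sphere_set_None //]; rewrite (negbTE K0).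
have [->|w0] := eqVneq w 0.
  rewrite mobius_inv_mx eqxx sphere_setP !qdot0l qnorm20 mulr0 subrr add0r qnormZ qnorm_conj Nc.
  have -> : K^-1 ^+ 2 * (K + rho) - rho / K ^+ 2 = K^-1 by field.
  split=> [/sphere_set_None //|[_ /eqP]].
  by rewrite invr_eq0 (negbTE K0).
rewrite mobius_inv_mx (negbTE w0) sphere_set_inv // -/K sphere_setP qdotBr !qdotZr.
rewrite qnormZ qnorm_conj Nc.
exact: inv_sphere_eqs_off.
Qed.

Lemma inv_sphere_set_on : K = 0 -> h != 0 ->
  mobius mx_inv @` X = sphere_set (qconj c) (1 / 2) ((2 * h)^-1 *: qconj m) ((2 * h)^-1 ^+ 2 * N m).
Proof.
move=> K0 h0; rewrite X_inv; apply/predeqP => -[w|]; rewrite /preimage /mkset; last first.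
  rewrite mobius_inv_mx_inf sphere_setP !qdot0l.
  by split=> [[/esym/eqP]|/sphere_set_None //]; rewrite (negbTE h0).
have [->|w0] := eqVneq w 0.
  rewrite mobius_inv_mx eqxx sphere_setP !qdot0l.
  by split=> [/sphere_set_None //|[/eqP]]; rewrite eq_sym mulf_eq0 oner_eq0 invr_eq0 pnatr_eq0.
rewrite mobius_inv_mx (negbTE w0) sphere_set_inv // sphere_setP -/K K0 qdotZr qnormZ qnorm_conj.
exact: inv_sphere_eqs_on.
Qed.

Lemma inv_sphere_set_plane : m != 0 -> K = 0 -> h = 0 ->
  mobius mx_inv @` X = plane_set (qconj m) 0 (N m *: qconj c - qdot m c *: qconj m) (N m / 2).
Proof.
move=> m0 K0 h0; have Nm0 : N m != 0 by rewrite qnorm2_eq0.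
rewrite X_inv; apply/predeqP => -[w|]; rewrite /preimage /mkset; last first.
  rewrite mobius_inv_mx_inf sphere_setP !qdot0l qnorm20 mulr0 subrr add0r -/K K0 h0.
  by split=> _; [left | split].
rewrite plane_setP; have [->|w0] := eqVneq w 0.
  rewrite mobius_inv_mx eqxx !qdot0l; split=> [/sphere_set_None //|[_ /esym/eqP]].
  by rewrite mulf_eq0 invr_eq0 pnatr_eq0 orbF (negbTE Nm0).
rewrite mobius_inv_mx (negbTE w0) sphere_set_inv // -/K K0 h0 qdotBr !qdotZr.
exact: inv_sphere_eqs_plane.
Qed.

End InvertSphere.

Lemma not_subset1_nonempty {T : Type} (A : set T) : ~ is_subset1 A -> exists x, A x.
Proof. by apply: contra_notP => nA x y Ax; case: nA; exists x. Qed.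

Lemma image_not_subset1 {T U : Type} (f : T -> U) (A : set T) :
  injective f -> ~ is_subset1 A -> ~ is_subset1 (f @` A).
Proof. by move=> fI nA fA; apply: nA => x y Ax Ay; apply/fI/fA; exists x + exists y. Qed.

Lemma inv_image_sphere_set X : is_sphere_set X -> ~ is_subset1 X ->
  is_sphere_set (mobius mx_inv @` X) \/ is_plane_set (mobius mx_inv @` X).
Proof.
move=> [m [h [c [rho [m0 ->]]]]] X2.
have Y2 := image_not_subset1 (mobius_inj inGL2_inv_mx) X2.
have [y Xy] := not_subset1_nonempty Y2.
have [K0|K0] := eqVneq (N c - rho) 0; last first.
  left; rewrite inv_sphere_set_off // in Xy *; do 4 eexists; split; last reflexivity.
  apply: contraTneq m0 => m'0; case: Xy => w [_ [wm _]].
  have h0 : h = 0 by apply/eqP; rewrite -oppr_eq0 -wm m'0 qdot0r.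
  move/eqP: m'0; rewrite h0 mulr0 scale0r subr0 scaler_eq0 (negbTE K0) qconj_eq0.
  by rewrite negbK.
have [h0|h0] := eqVneq h 0; last first.
  left; rewrite inv_sphere_set_on // in Xy *; do 4 eexists; split; last reflexivity.
  apply: contraTneq isT => c0; case: Xy => w [_ [+ _]].
  by rewrite c0 qdot0r => /eqP; rewrite eq_sym mulf_eq0 oner_eq0 invr_eq0 pnatr_eq0.
right; rewrite inv_sphere_set_plane // in Y2 *; do 4 eexists; split; last reflexivity.
- by rewrite qconj_eq0.
- apply/eqP => b0; apply: Y2; rewrite b0 => y1 y2 [->|[w [_ [_ +]]]] [->|[w' [_ [_ +]]]] //;
    by rewrite qdot0r => /esym/eqP; rewrite mulf_eq0 invr_eq0 pnatr_eq0 orbF qnorm2_eq0 (negbTE m0).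
- by rewrite qdotBr !qdotZr qdot_conj qdotxx qnorm_conj mulrC subrr.
Qed.

Definition rvc n (u : 'rV[R]_n.+1) (k : nat) : R := u ord0 (inord k).

Lemma rvc_ord n (u : 'rV[R]_n.+1) (i : 'I_n.+1) : u ord0 i = rvc u i.
Proof. by rewrite /rvc inord_val. Qed.

Definition pure3 (u : 'rV[R]_3) : quat := qmk 0 (rvc u 0) (rvc u 1) (rvc u 2).

Definition mx_normal3 (m : quat) : 'M[R]_(3, 4) := \matrix_(i < 3, j < 4)
  (qmul m (qmk 0 (i == 0 :> nat)%:R (i == 1 :> nat)%:R (i == 2 :> nat)%:R)) ord0 j.

Lemma mul_mx_normal3 m u : u *m mx_normal3 m = qmul m (pure3 u).
Proof.
apply/rowP => j; rewrite !mxE !big_ord_recl big_ord0 !mxE /= !rvc_ord /pure3.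
by case: j => [[|[|[|[|k]]]] ?] //=; qsimpl; rewrite /=; ring.
Qed.

Lemma rank_mx_normal3 m : m != 0 -> \rank (mx_normal3 m) = 3%N.
Proof.
move=> m0; apply/eqP; apply: inj_row_free => u; rewrite mul_mx_normal3.
move/eqP; rewrite qmul_eq0 (negbTE m0) /= => /eqP u0.
have := congr1 (qc^~ 1%N) u0; have := congr1 (qc^~ 2%N) u0; have := congr1 (qc^~ 3%N) u0.
rewrite /pure3 qc_qmk1 qc_qmk2 qc_qmk3 !qc0 => u2 u1 u0'.
by apply/rowP => i; rewrite mxE rvc_ord; case: i => [[|[|[|k]]] ?] //=.
Qed.

Lemma pure3_row q : qc q 0 = 0 -> pure3 (\row_(i < 3) qc q i.+1) = q.
Proof.
by move=> q0; apply: quatP; rewrite /pure3 ?qc_qmk0 ?qc_qmk1 ?qc_qmk2 ?qc_qmk3 /rvc ?mxE ?inordK.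
Qed.

Lemma hyperplane_param m x : m != 0 -> qdot x m = 0 <-> exists u, x = u *m mx_normal3 m.
Proof.
move=> m0; split=> [xm|[u ->]]; last by rewrite mul_mx_normal3 /pure3; qsimpl; ring.
exists (\row_(i < 3) qc (qmul (qinv m) x) i.+1); rewrite mul_mx_normal3 pure3_row ?qmulVKr //.
have re : qc (qmul (qconj m) x) 0 = qdot x m by qsimpl; ring.
by rewrite qmulZl qcZ re xm mulr0.
Qed.

Lemma sphere_set_foot m h c rho : m != 0 ->
  exists c0 r, qdot c0 m = h /\ sphere_set m h c rho = sphere_set m h c0 r.
Proof.
move=> m0; have Nm0 : N m != 0 by rewrite qnorm2_eq0.
set la := (h - qdot c m) / N m; set c0 := c + la *: m.
have c0m : qdot c0 m = h by rewrite qdotDl qdotZl qdotxx /la divfK // addrC subrK.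
exists c0, (rho - la ^+ 2 * N m); split=> //; apply/predeqP => y.
suff pyth z : qdot z m = h -> N (z - c) = N (z - c0) + la ^+ 2 * N m.
  split=> -[z [-> [zm zc]]]; exists z; do 2 split => //.
    by rewrite -zc pyth // addrK.
  by rewrite pyth // zc subrK.
move=> zm; have -> : z - c = (z - c0) + la *: m by rewrite opprD addrA subrK.
by rewrite qnormD qdotZr qdotBl zm c0m subrr !mulr0 addr0 qnormZ.
Qed.

Lemma is_2sphere_sphere_set m h c rho : m != 0 -> ~ is_subset1 (sphere_set m h c rho) ->
  is_2sphere (sphere_set m h c rho).
Proof.
move=> m0; have [c0 [r [c0m ->]]] := sphere_set_foot h c rho m0 => S2.
have r_ge0 : 0 <= r by case: (not_subset1_nonempty S2) => _ [z [_ [_ <-]]]; exact: qnorm2_ge0.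
have r_gt0 : 0 < r.
  rewrite lt0r r_ge0 andbT; apply/eqP => r0; apply: S2 => _ _ [z1 [-> [_ z1c]]] [z2 [-> [_ z2c]]].
  by move/eqP: z1c; move/eqP: z2c; rewrite r0 !qnorm2_eq0 !subr_eq0 => /eqP-> /eqP->.
exists c0, (Num.sqrt r), (mx_normal3 m); split; first by rewrite sqrtr_gt0.
split; first exact: rank_mx_normal3.
move=> y; rewrite sqr_sqrtr ?ltW //; split.
  case=> z [-> [zm zc]].
  have /(hyperplane_param _ m0) [u zu] : qdot (z - c0) m = 0 by rewrite qdotBl zm c0m subrr.
  by exists u; rewrite -zu addrC subrK.
case=> u [-> uc].
have um : qdot (u *m mx_normal3 m) m = 0 by apply/hyperplane_param => //; exists u.
by exists (c0 + u *m mx_normal3 m); rewrite qdotDl c0m um addr0 addrC addrK.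
Qed.

Definition perp_pure (v : quat) : quat :=
  if (qc v 1 == 0) && (qc v 2 == 0) then qmk 0 1 0 0 else qmk 0 (- qc v 2) (qc v 1) 0.

Section PerpPure.
Variable v : quat.
Hypothesis v_re : qc v 0 = 0.
Local Notation w := (perp_pure v).

Let perp_pureE : (qc v 1 = 0 /\ qc v 2 = 0 /\ w = qmk 0 1 0 0) \/
  (w = qmk 0 (- qc v 2) (qc v 1) 0 /\ (qc v 1 != 0 \/ qc v 2 != 0)).
Proof.
rewrite /perp_pure; case: ifP => [/andP [/eqP -> /eqP ->]|]; first by left.
by move/negbT; rewrite negb_and => /orP vn0; right.
Qed.

Lemma perp_pure_neq0 : w != 0.
Proof.
case: perp_pureE => [[_ [_ ->]]|[-> vn0]].
  by apply/eqP => /(congr1 (qc^~ 1%N)) /eqP; rewrite qc_qmk1 qc0 oner_eq0.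
apply/eqP => e; have := congr1 (qc^~ 1%N) e; have := congr1 (qc^~ 2%N) e.
rewrite qc_qmk1 qc_qmk2 !qc0 => v1 /eqP; rewrite oppr_eq0 => /eqP v2.
by move: vn0; rewrite v1 v2 eqxx; case.
Qed.

Lemma perp_pure_re : qc w 0 = 0.
Proof. by case: perp_pureE => [[_ [_ ->]]|[-> _]]; rewrite qc_qmk0. Qed.

Lemma perp_pure_dot : qdot w v = 0.
Proof. by case: perp_pureE => [[e1 [e2 ->]]|[-> _]]; qsimpl; rewrite ?e1 ?e2; ring. Qed.

Lemma perp_pure_mul_re : qc (qmul v w) 0 = 0.
Proof. by case: perp_pureE => [[e1 [e2 ->]]|[-> _]]; qsimpl; rewrite ?v_re ?e1 ?e2; ring. Qed.

Lemma perp_pure_mul_dot : qdot (qmul v w) v = 0.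
Proof. by case: perp_pureE => [[e1 [e2 ->]]|[-> _]]; qsimpl; rewrite ?v_re ?e1 ?e2; ring. Qed.

Lemma perp_pure_expand q : (N v * N w) *: q = (N v * N w * qc q 0) *: qone +
  (N w * qdot q v) *: v + (N v * qdot q w) *: w + qdot q (qmul v w) *: qmul v w.
Proof.
by case: perp_pureE => [[e1 [e2 ->]]|[-> _]]; apply: quatP; qsimpl; rewrite ?v_re ?e1 ?e2; ring.
Qed.

Lemma perp_pure_anti : qmul w v = - qmul v w.
Proof.
by case: perp_pureE => [[e1 [e2 ->]]|[-> _]]; apply: quatP; qsimpl; rewrite ?v_re ?e1 ?e2; ring.
Qed.

End PerpPure.

Definition mx_span2 (a w w' : quat) : 'M[R]_(2, 4) := \matrix_(i < 2, j < 4)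
  (qmul a ((i == 0 :> nat)%:R *: w + (i == 1 :> nat)%:R *: w')) ord0 j.

Lemma mul_mx_span2 a w w' u : u *m mx_span2 a w w' = qmul a (rvc u 0 *: w + rvc u 1 *: w').
Proof.
apply/rowP => j; rewrite !mxE !big_ord_recl big_ord0 !mxE /= !rvc_ord.
by case: j => [[|[|[|[|k]]]] ?] //=; qsimpl; rewrite /=; ring.
Qed.

Definition mx_normal2 (a b : quat) : 'M[R]_(2, 4) :=
  let v := qmul (qconj a) b in mx_span2 a (perp_pure v) (qmul v (perp_pure v)).

Section PlaneDirections.
Variables a b : quat.
Hypotheses (a0 : a != 0) (b0 : b != 0) (ab : qdot a b = 0).
Local Notation v := (qmul (qconj a) b).
Local Notation w := (perp_pure v).

Let v_re : qc v 0 = 0.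
Proof. by rewrite -ab; qsimpl; ring. Qed.

Let mul_mx_normal2 u : u *m mx_normal2 a b = qmul a (rvc u 0 *: w + rvc u 1 *: qmul v w).
Proof. exact: mul_mx_span2. Qed.

Let qdot_mul_b X : qdot (qmul a X) b = qdot X v.
Proof. qsimpl; ring. Qed.

Let qdot_mul_a X : qdot (qmul a X) a = N a * qc X 0.
Proof. qsimpl; ring. Qed.

Lemma plane_dir_param x :
  (qdot x a = 0 /\ qdot x b = 0) <-> exists u, x = u *m mx_normal2 a b.
Proof.
have Na0 : N a != 0 by rewrite qnorm2_eq0.
split=> [[xa xb]|[u ->]]; last first.
  rewrite mul_mx_normal2 qdot_mul_a qdot_mul_b qdotDl !qdotZl qcD !qcZ.
  by rewrite perp_pure_re perp_pure_mul_re // perp_pure_dot perp_pure_mul_dot //; split; ring.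
set q := qmul (qinv a) x; have xq : x = qmul a q by rewrite qmulVKr.
have q_re : qc q 0 = 0 by apply: (mulfI Na0); rewrite -qdot_mul_a -xq xa mulr0.
have qv : qdot q v = 0 by rewrite -qdot_mul_b -xq.
have Nv0 : N v != 0 by rewrite qnorm2_eq0 qmul_neq0 ?qconj_eq0.
have Nw0 : N w != 0 by rewrite qnorm2_eq0 perp_pure_neq0.
set s := qdot q w / N w; set t := qdot q (qmul v w) / (N v * N w).
exists (\row_(i < 2) if i == 0 :> nat then s else t).
rewrite mul_mx_normal2 xq /rvc !mxE !inordK //=.
congr qmul; apply: (@scalerI _ _ (N v * N w)); first by rewrite mulf_neq0.
rewrite perp_pure_expand // q_re qv !mulr0 !scale0r !add0r scalerDr !scalerA.
by congr (_ *: _ + _ *: _); rewrite /s /t; field; rewrite ?Nv0 ?Nw0.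
Qed.

Lemma rank_mx_normal2 : \rank (mx_normal2 a b) = 2%N.
Proof.
apply/eqP; apply: inj_row_free => u; rewrite mul_mx_normal2.
have -> : rvc u 0 *: w + rvc u 1 *: qmul v w = qmul (rvc u 0 *: qone + rvc u 1 *: v) w.
  by rewrite qmulDl !qmulZl qmul1l.
move/eqP; rewrite !qmul_eq0 (negbTE a0) (negbTE (perp_pure_neq0 _)) orbF /= => /eqP su.
have u0 : rvc u 0 = 0.
  by move: (congr1 (qc^~ 0%N) su); rewrite qcD !qcZ qc_one0 v_re qc0 mulr1 mulr0 addr0.
move: su; rewrite u0 scale0r add0r => /eqP; rewrite scaler_eq0 qmul_eq0 qconj_eq0.
rewrite (negbTE a0) (negbTE b0) !orbF => /eqP u1.
by apply/rowP => i; rewrite mxE rvc_ord; case: i => [[|[|k]] ?] //=.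
Qed.

End PlaneDirections.

Lemma is_2plane_plane_set a al b be : a != 0 -> b != 0 -> qdot a b = 0 ->
  is_2plane (plane_set a al b be).
Proof.
move=> a0 b0 ab; have Na0 : N a != 0 by rewrite qnorm2_eq0.
have Nb0 : N b != 0 by rewrite qnorm2_eq0.
set p := (al / N a) *: a + (be / N b) *: b.
have pa : qdot p a = al by rewrite qdotDl !qdotZl qdotxx qdotC ab mulr0 addr0 divfK.
have pb : qdot p b = be by rewrite qdotDl !qdotZl qdotxx ab mulr0 add0r divfK.
clearbody p; exists p, (mx_normal2 a b); split; first exact: rank_mx_normal2.
case=> [z|]; last by split=> _; left.
rewrite plane_setP; split=> [[za zb]|[//|[u [->]]]].
  have /(plane_dir_param a0 b0 ab) [u zu] : qdot (z - p) a = 0 /\ qdot (z - p) b = 0.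
    by rewrite !qdotBl za zb pa pb !subrr.
  by right; exists u; rewrite -zu addrC subrK.
have [ua ub] : qdot (u *m mx_normal2 a b) a = 0 /\ qdot (u *m mx_normal2 a b) b = 0.
  by apply/(plane_dir_param a0 b0 ab); exists u.
by rewrite !qdotDl pa pb ua ub !addr0.
Qed.

(** * Conjugacy classes *)

Definition qim (p : quat) : quat := p - qc p 0 *: qone.

Lemma qim_re p : qc (qim p) 0 = 0.
Proof. by rewrite /qim qcB qcZ qc_one0 mulr1 subrr. Qed.

Lemma qimE p : p = qim p + qc p 0 *: qone.
Proof. by rewrite subrK. Qed.

Lemma qrealE p : qreal p <-> qim p = 0.
Proof.
split=> [[e1 [e2 e3]]|p0]; first by apply: quatP; qsimpl; rewrite ?e1 ?e2 ?e3; ring.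
have coord k : qc p k = qc p 0 * qc qone k.
  by apply/eqP; rewrite -subr_eq0 -qcZ -qcB -/(qim p) p0 qc0.
by rewrite /qreal (coord 1%N) (coord 2%N) (coord 3%N) qc_one1 qc_one2 qc_one3 !mulr0.
Qed.

Lemma pure_sqr u : qc u 0 = 0 -> qmul u u = - N u *: qone.
Proof. by move=> u_re; apply: quatP; qsimpl; rewrite u_re; ring. Qed.

Lemma conjg_scalar a r : a != 0 -> qmul (qmul a (r *: qone)) (qinv a) = r *: qone.
Proof. by move=> a0; rewrite qmulZr qmul1r qmulZl qmulrV. Qed.

(* The witness N u - w u works unless w = -u, and then any pure quaternion orthogonal
   to u anticommutes with it. *)
Lemma pure_conjugate u w : qc u 0 = 0 -> qc w 0 = 0 -> u != 0 -> N u = N w ->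
  exists2 a, a != 0 & qmul a u = qmul w a.
Proof.
move=> u_re w_re u0 uw; have Nu0 : N u != 0 by rewrite qnorm2_eq0.
have [a0|a0] := eqVneq (N u *: qone - qmul w u) 0; last first.
  exists (N u *: qone - qmul w u) => //; apply/eqP; rewrite -subr_eq0.
  have -> : qmul (N u *: qone - qmul w u) u - qmul w (N u *: qone - qmul w u) = (N u - N w) *: u.
    by apply: quatP; qsimpl; rewrite u_re w_re; ring.
  by rewrite uw subrr scale0r.
have wu : w = - u.
  apply: (@scalerI _ _ (N u)) => //; move/eqP: a0; rewrite subr_eq0 => /eqP/(congr1 (qmul^~ u)).
  by rewrite qmulZl qmul1l -qmulA pure_sqr // qmulZr qmul1r scalerN => ->; rewrite scaleNr opprK.
exists (perp_pure u); first exact: perp_pure_neq0.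
by rewrite perp_pure_anti // wu qmulNl.
Qed.

Lemma conj_orbit_real p : qreal p -> conj_orbit p = [set Some p].
Proof.
move/qrealE => p0; rewrite [p]qimE p0 add0r; apply/predeqP => y.
split=> [[a a0 <-]|->]; first by rewrite conjg_scalar.
by exists qone; [exact: qone_neq0 | rewrite qinv1 qmul1l qmul1r].
Qed.

Lemma qc_conjg0 a p : a != 0 -> qc (qmul (qmul a p) (qinv a)) 0 = qc p 0.
Proof.
move=> a0; have Na0 : N a != 0 by rewrite qnorm2_eq0.
rewrite qmulZr qcZ (_ : qc _ 0 = N a * qc p 0) ?mulKf //; qsimpl; ring.
Qed.

Lemma conj_orbit_sphere p : ~ qreal p ->
  conj_orbit p = sphere_set qone (qc p 0) (qc p 0 *: qone) (N (qim p)).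
Proof.
rewrite qrealE => /eqP p0; apply/predeqP => y; split.
  case=> a a0 <-; exists (qmul (qmul a p) (qinv a)); rewrite qdot1r qc_conjg0 //.
  do 2 split=> //; rewrite -(conjg_scalar _ a0) -qmulBl -qmulBr !qnormM qnorm_inv.
  by rewrite mulrAC mulfV ?mul1r // qnorm2_eq0.
case=> z [-> [zre zc]]; rewrite qdot1r in zre.
have Nim : N (qim p) = N (qim z) by rewrite -zc /qim zre.
have [a a0 az] := pure_conjugate (qim_re p) (qim_re z) p0 Nim.
exists a => //; rewrite [in LHS](qimE p) qmulDr qmulDl az qmulrK // conjg_scalar //.
by rewrite -zre -qimE.
Qed.

Lemma conj_orbit_not_subset1 p : ~ qreal p -> ~ is_subset1 (conj_orbit p).
Proof.
move=> p_nreal; rewrite conj_orbit_sphere // => S1.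
have Nc : N (qconj p - qc p 0 *: qone) = N (qim p) by rewrite /qim; qsimpl; ring.
have [pc] : Some p = Some (qconj p).
  by apply: S1; [exists p; rewrite qdot1r | exists (qconj p); rewrite qdot1r qc_conj0 Nc].
apply: p_nreal; have := congr1 (qc^~ 1%N) pc; have := congr1 (qc^~ 2%N) pc.
have := congr1 (qc^~ 3%N) pc; rewrite /= qc_conj1 qc_conj2 qc_conj3 => e3 e2 e1.
by split; [|split]; lra.
Qed.

Lemma is_sphere_set_trans t X : is_sphere_set X -> is_sphere_set (mobius (mx_trans t) @` X).
Proof.
by case=> m [h [c [rho [m0 ->]]]]; rewrite trans_sphere_set; do 4 eexists; split; [exact: m0 |].
Qed.

Lemma is_plane_set_trans t X : is_plane_set X -> is_plane_set (mobius (mx_trans t) @` X).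
Proof.
case=> a [al [b [be [a0 b0 ab ->]]]]; rewrite trans_plane_set.
by do 4 eexists; split; [exact: a0 | exact: b0 | exact: ab |].
Qed.

Lemma is_sphere_set_rmul k X : k != 0 -> is_sphere_set X -> is_sphere_set (mobius (mx_rmul k) @` X).
Proof.
move=> k0 [m [h [c [rho [m0 ->]]]]]; rewrite rmul_sphere_set //.
by do 4 eexists; split; [exact: qmul_neq0 m0 k0 | reflexivity].
Qed.

Lemma is_sphere_set_raff al t X : al != 0 -> is_sphere_set X ->
  is_sphere_set (mobius (mx_raff al t) @` X).
Proof.
move=> al0 XS; have -> : mobius (mx_raff al t) = mobius (mx_trans t) \o mobius (mx_rmul al).
  by apply/funext => x; rewrite mobius_raff.
by rewrite -image_comp; apply/is_sphere_set_trans/is_sphere_set_rmul.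
Qed.

Lemma frame_image F X : frame_shape F -> is_sphere_set X -> ~ is_subset1 X ->
  is_sphere_set (mobius F @` X) \/ is_plane_set (mobius F @` X).
Proof.
case=> [[al [t [al0 ->]]]|[c [al [be [al0 ->]]]]] XS X2; first by left; apply: is_sphere_set_raff.
have -> : mobius (mx_rinv c al be) = mobius (mx_trans c) \o mobius mx_inv \o mobius (mx_raff al be).
  by apply/funext => x; rewrite mobius_rinv.
rewrite -!image_comp.
have Y2 := image_not_subset1 (mobius_inj (inGL2_raff be al0)) X2.
have [YS|YP] := inv_image_sphere_set (is_sphere_set_raff be al0 XS) Y2.
  by left; apply: is_sphere_set_trans.
by right; apply: is_plane_set_trans.
Qed.

Lemma is_2sphere_of_sphere_set X : is_sphere_set X -> ~ is_subset1 X -> is_2sphere X.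
Proof. by case=> m [h [c [rho [m0 ->]]]]; apply: is_2sphere_sphere_set. Qed.

Lemma is_2plane_of_plane_set X : is_plane_set X -> is_2plane X.
Proof. by case=> a [al [b [be [a0 b0 ab ->]]]]; apply: is_2plane_plane_set. Qed.

Lemma is_point_subset1 X : is_point X -> is_subset1 X.
Proof. by case=> p Xp x y /Xp -> /Xp ->. Qed.

End QuaternionicMobius.

Theorem mainTheorem2 (R : realType) (q1 q2 q3 q4 q1' q2' q3' : hpoint R) :
  q1 <> q2 -> q1 <> q3 -> q1 <> q4 -> q2 <> q3 -> q2 <> q4 -> q3 <> q4 ->
  q1' <> q2' -> q1' <> q3' -> q2' <> q3' ->
  let S := fun y : hpoint R =>
    exists g : qmat R, inGL2 g /\ mobius g q1 = q1' /\ mobius g q2 = q2' /\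
                       mobius g q3 = q3' /\ mobius g q4 = y in
  (is_2sphere S \/ is_2plane S \/ is_point S) /\
  (is_point S <-> qreal (crossratio q1 q2 q3 q4)).
Proof.
move=> h12 h13 h14 h23 h24 h34 h12' h13' h23' S.
set p := crossratio q1 q2 q3 q4.
have [B crB] := cr_normalizer_exists h12 h13 h23.
have [F [GF F0 F1 Finf Fshape]] := frame_map_exists h12' h13' h23'.
have SE : S = mobius F @` conj_orbit p.
  exact: solution_setE crB (nesym h14) (nesym h24) (nesym h34) GF F0 F1 Finf.
have [p_real|p_nreal] := pselect (qreal p).
  have S_pt : is_point S.
    by exists (mobius F (Some p)) => y; rewrite SE conj_orbit_real // image_set1.
  by split; [right; right | split].
have X2 := conj_orbit_not_subset1 p_nreal.
have S2 : ~ is_subset1 S by rewrite SE; apply: image_not_subset1 (mobius_inj GF) X2.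
split; last by split=> [/is_point_subset1/S2|/p_nreal].
have XS : is_sphere_set (conj_orbit p).
  by rewrite conj_orbit_sphere //; do 4 eexists; split; [exact: qone_neq0|].
rewrite SE in S2 *; case: (frame_image Fshape XS X2) => [SS|SP].
  by left; apply: is_2sphere_of_sphere_set.
by right; left; apply: is_2plane_of_plane_set.
Qed.
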